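(* Every multilinear quasi-identity of $M_n$ of degree $n$ in $x_1,\dots,x_n$ is a scalar multiple (by an element of $F$) of the Cayley–Hamilton polynomial $Q_n$.
   Context: $F$ is a field of characteristic $0$, $M_n=M_n(F)$, $\mathcal C=F[x^{(k)}_{ij}]$, quasi-polynomials are elements of the free $\mathcal C$-algebra on noncommuting $x_1,x_2,\dots$; a quasi-identity vanishes upon substituting any $A_k=(a^{(k)}_{ij})\in M_n$ for $x_k$ and $a^{(k)}_{ij}$ for $x^{(k)}_{ij}$. A quasi-polynomial $P(x_1,\dots,x_n)$ is multilinear of degree $n$ if it is a sum of terms $\lambda(x_{i_1},\dots,x_{i_k})x_{i_{k+1}}\cdots x_{i_n}$ where $\{1,\dots,n\}$ is the disjoint union of $\{i_1,\dots,i_k\}$ and $\{i_{k+1},\dots,i_n\}$ and $\lambda$ is an $F$-linear combination of products $x^{(i_1)}_{s_1t_1}\cdots x^{(i_k)}_{s_kt_k}$. With generic matrices $\xi_k=(x^{(k)}_{ij})$ and $\mathrm{tr}(x_{i_1}\cdots x_{i_r}):=\mathrm{tr}(\xi_{i_1}\cdots\xi_{i_r})$, $Q_n=\sum_{\sigma\in S_{n+1}}\epsilon_\sigma\phi_\sigma(x_1,\dots,x_n)$, where for $\sigma=(i_1,\dots,i_{k_1})\cdots(u_1,\dots,u_h)(s_1,\dots,s_k,n+1)$ (disjoint cycles, the one containing $n+1$ last) $\phi_\sigma=\mathrm{tr}(x_{i_1}\cdots x_{i_{k_1}})\cdots\mathrm{tr}(x_{u_1}\cdots x_{u_h})x_{s_1}\cdots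 x_{s_k}$. *)

From HB Require Import structures.
From mathcomp Require Import all_boot all_order all_algebra all_fingroup.
Set Implicit Arguments. Unset Strict Implicit. Unset Printing Implicit Defensive.
Import Order.TTheory GRing.Theory Num.Theory.
Local Open Scope ring_scope.

(* A multilinear quasi-monomial of degree n in x_1..x_n (indices 'I_n):
   a pair (e, w) where e k = Some (s, t) means the commutative factor
   x^{(k)}_{s t} occurs in the coefficient lambda, and w is the word
   (noncommutative monomial) x_{w_1} ... x_{w_r}. *)
Definition quasi_mono (n : nat) := ({ffun 'I_n -> option ('I_n * 'I_n)} * seq 'I_n)%type.

Definition ml_mono n (m : quasi_mono n) : bool :=
  uniq m.2 && [forall k, (k \in m.2) == (m.1 k == None)].

(* A quasi-polynomial in x_1..x_n (restricted to the relevant monomials) is a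
   formal finite F-linear combination of quasi-monomials. *)
Definition quasi_poly (F : fieldType) n := seq (F * quasi_mono n).

(* Coefficient of a monomial: formal equality of quasi-polynomials is
   equality of all coefficients. *)
Definition quasi_coef (F : fieldType) n (P : quasi_poly F n) (m : quasi_mono n) : F :=
  \sum_(t <- P | t.2 == m) t.1.

Definition quasi_multilinear (F : fieldType) n (P : quasi_poly F n) : bool :=
  all (fun t => ml_mono t.2) P.

(* Evaluation at matrices A k (x^{(k)}_{ij} |-> A k i j). *)
Definition quasi_mono_eval (F : fieldType) n (m : quasi_mono n) (A : 'I_n -> 'M[F]_n)
  : 'M[F]_n :=
  (\prod_(k : 'I_n) (if m.1 k is Some p then A k p.1 p.2 else 1))
    *: \prod_(k <- m.2) A k.

Definition quasi_eval (F : fieldType) n (P : quasi_poly F n) (A : 'I_n -> 'M[F]_n)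
  : 'M[F]_n :=
  \sum_(t <- P) t.1 *: quasi_mono_eval t.2 A.

Definition quasi_identity (F : fieldType) n (P : quasi_poly F n) : Prop :=
  forall A : 'I_n -> 'M[F]_n, quasi_eval P A = 0.

(* n+1 is represented by ord_max : 'I_n.+1, and k <= n by widen_ord. *)

(* Word of the cycle (s_1,...,s_k,n+1) of sigma containing n+1:
   [s_1; ...; s_k] with s_1 = sigma(n+1), s_{a+1} = sigma(s_a). *)
Definition cycle_word n (s : 'S_n.+1) : seq 'I_n :=
  pmap (fun x : 'I_n.+1 => (insub (val x) : option 'I_n)) (fingraph.orbit (fun x => s x) ord_max).

Definition perm_on_small n (s : 'S_n.+1) (i : 'I_n) : 'I_n :=
  insubd i (val (s (widen_ord (leqnSn n) i))).

(* Expanding tr(x_{i_1}...x_{i_r}) = sum_j x^{(i_1)}_{j_{i_1} j_{i_2}} ...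
   x^{(i_r)}_{j_{i_r} j_{i_1}}: for each row assignment j, the factor of
   variable i (outside the cycle of n+1) is x^{(i)}_{j(i), j(sigma i)}. *)
Definition phi_mono n (s : 'S_n.+1) (j : {ffun 'I_n -> 'I_n}) : quasi_mono n :=
  ([ffun i => if i \in cycle_word s then None
              else Some (j i, j (perm_on_small s i))], cycle_word s).

(* j is normalised (j i = i) on the indices of the word, where it is unused. *)
Definition phi_index_ok n (s : 'S_n.+1) (j : {ffun 'I_n -> 'I_n}) : bool :=
  [forall i, (i \in cycle_word s) ==> (j i == i)].

Definition phi (F : fieldType) n (s : 'S_n.+1) : quasi_poly F n :=
  [seq (1, phi_mono s j) | j <- [seq j <- enum {ffun 'I_n -> 'I_n} | phi_index_ok s j]].

Definition Qn (F : fieldType) n : quasi_poly F n :=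
  flatten [seq [seq ((-1) ^+ odd_perm s * t.1, t.2) | t <- phi F s]
          | s <- enum [set: 'S_n.+1]].

From HB Require Import structures.
From mathcomp Require Import all_boot all_order all_algebra all_fingroup.
Import Order.TTheory GRing.Theory Num.Theory.
Local Open Scope ring_scope.
Set Implicit Arguments. Unset Strict Implicit. Unset Printing Implicit Defensive.

(* Call a multilinear quasi-monomial m "cyclic" when its commutative factors
   x^(i)_(s_i, t_i) (i in the set [tvars m] of trace variables) have injective
   row map i |-> s_i and column map i |-> t_i with the same image.  Then
   [tnext m] sends i to the trace variable whose row is t_i; it permutes the
   trace variables, and its cycles are the traces making up the coefficient
   of m.  [open_cycle m k] moves the cycle of k from the coefficient to the
   end of the word.  Call a function f on monomials
     (Z) [vanishes_acyclic] when f m = 0 for every non-cyclic m, and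
     (R) [alternating] when f (open_cycle m k) = - f m.
   Such an f is determined by its value at the pure word x_1 ... x_n
   ([alternating_eq0]): induct on the number of trace variables; a pure word
   can be reordered at will, since opening a single cycle at its different
   points produces all its rotations.
   1. The coefficient map of P satisfies (Z) and (R): substitute for the
      variables matrix units chosen along a "trail" through the word of m;
      the corresponding entry of P then only sees m (when m is not cyclic),
      or m and open_cycle m k (when m is cyclic).
   2. The coefficient of Q_n at a cyclic m is the sign of a permutation
      [mono_perm m] of {1, .., n+1}, which opening a cycle multiplies by a
      transposition; at a non-cyclic m the terms of Q_n cancel in pairs
      (characteristic 0).  So Q_n satisfies (Z) and (R), and its coefficient
      at the pure word is non-zero.
   The theorem follows by applying [alternating_eq0] to coef P - a coef Q_n. *)

Section MatrixUnits.
Variables (n : nat) (F : fieldType).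
Implicit Types (E : 'I_n -> 'I_n * 'I_n) (l : seq 'I_n) (P : quasi_poly F n).

(* An assignment E substitutes the matrix unit e_(E k) for x_k.  The word l
   then evaluates to e_(a, b) exactly when it "walks" from a to b. *)
Fixpoint walk E (a : 'I_n) l (b : 'I_n) : bool :=
  if l is c :: l' then ((E c).1 == a) && walk E (E c).2 l' b else a == b.

Definition units_of E (k : 'I_n) : 'M[F]_n := delta_mx (E k).1 (E k).2.

Lemma prod_units_entry E l a b :
  (\prod_(k <- l) units_of E k) a b = (walk E a l b)%:R.
Proof.
elim: l a b => [|c l IH] a b /=; first by rewrite big_nil mxE.
rewrite big_cons -mulmxE mxE (bigD1 (E c).2) //= [X in _ + X]big1 ?addr0.
  by rewrite IH mxE eqxx andbT -natrM mulnb eq_sym.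
by move=> x hx; rewrite mxE (negbTE hx) andbF mul0r.
Qed.

Lemma prod_natr_forall (T : finType) (B : pred T) :
  \prod_(k : T) ((B k)%:R : F) = ([forall k, B k])%:R.
Proof.
case: forallP => [H|H]; first by rewrite big1 // => k _; rewrite H.
have /forallPn [k Hk] : ~~ [forall k, B k] by apply/forallP.
by rewrite (bigD1 k) //= (negbTE Hk) mul0r.
Qed.

(* The monomial m contributes to the (a, b) entry at the units E: its
   commutative factors are those of E and its word walks from a to b. *)
Definition selects E a b (m : quasi_mono n) : bool :=
  [forall k, if m.1 k is Some p then p == E k else true] && walk E a m.2 b.

Lemma mono_eval_units_entry E a b (m : quasi_mono n) :
  quasi_mono_eval m (units_of E) a b = (selects E a b m)%:R.
Proof.
rewrite /quasi_mono_eval mxE prod_units_entry /selects -mulnb natrM -prod_natr_forall.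
congr (_ * _); apply: eq_bigr => k _; case: (m.1 k) => [[p1 p2]|] //=.
by rewrite mxE -pair_eqE.
Qed.

Definition mono_with E l : quasi_mono n :=
  ([ffun k => if k \in l then None else Some (E k)], l).

Lemma selects_mono_with E a b l : selects E a b (mono_with E l) = walk E a l b.
Proof.
rewrite /selects /= andb_idl // => _; apply/forallP => k.
by rewrite ffunE; case: ifP.
Qed.

Lemma selects_ml E a b (m : quasi_mono n) : ml_mono m -> selects E a b m ->
  [/\ m = mono_with E m.2, uniq m.2 & walk E a m.2 b].
Proof.
case: m => f w /andP[Hu /forallP Hk] /andP[/forallP Hf Hw]; split => //.
congr (_, _); apply/ffunP => k; rewrite ffunE.
by move: (Hk k) (Hf k); case: (f k) => [p|] /= /eqP -> => [|_] //= /eqP ->.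
Qed.

Lemma natr_mem_uniq (T : eqType) (x : T) (s : seq T) : uniq s ->
  ((x \in s)%:R : F) = \sum_(y <- s) (x == y)%:R.
Proof.
elim: s => [|y s IH]; first by rewrite big_nil.
rewrite big_cons /= inE => /andP[ys us]; rewrite -IH //.
by case: eqP => [->|_] /=; rewrite ?add0r // (negbTE ys) addr0.
Qed.

(* This is the only way the hypothesis
   on P is used. *)
Lemma qid_selected_sum P E a b (ms : seq (quasi_mono n)) :
  quasi_multilinear P -> quasi_identity P -> uniq ms ->
  (forall m, ml_mono m -> selects E a b m = (m \in ms)) ->
  \sum_(m <- ms) quasi_coef P m = 0.
Proof.
move=> /allP HP /(_ (units_of E)) /(congr1 (fun M : 'M[F]_n => M a b)) HI Hu Hsel.
rewrite mxE /quasi_eval summxE in HI; rewrite -[RHS]HI; apply: esym.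
rewrite (eq_big_seq (fun t => \sum_(m <- ms) t.1 * (t.2 == m)%:R)); last first.
  by move=> t /HP Ht; rewrite mxE mono_eval_units_entry Hsel // natr_mem_uniq // mulr_sumr.
rewrite exchange_big; apply: eq_bigr => m _; rewrite /quasi_coef [RHS]big_mkcond.
by apply: eq_bigr => t _; rewrite mulr_natr mulrb.
Qed.
End MatrixUnits.

Section Trails.
Variable n : nat.
Implicit Types (E : 'I_n -> 'I_n * 'I_n) (l w vs : seq 'I_n).

Lemma walk_cat E a l1 l2 x b :
  walk E a l1 x -> walk E x l2 b -> walk E a (l1 ++ l2) b.
Proof.
elim: l1 a => [|c l1 IH] a /=; first by move=> /eqP ->.
by case/andP=> -> /IH H /H ->.
Qed.

Lemma walk_catE E a l1 l2 b : walk E a (l1 ++ l2) b ->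
  exists x, walk E a l1 x /\ walk E x l2 b.
Proof.
elim: l1 a => [|c l1 IH] a /=; first by move=> H; exists a; rewrite eqxx.
by case/andP=> -> /IH [x [H1 H2]]; exists x; rewrite H1.
Qed.

Lemma walk_last E a l c b : walk E a (rcons l c) b -> (E c).2 = b.
Proof. by rewrite -cats1 => /walk_catE [x [_ /=]] /andP[_ /eqP]. Qed.

Fixpoint trail E (v : 'I_n) w vs : bool :=
  match w, vs with
  | [::], [::] => true
  | c :: w', v' :: vs' => (E c == (v, v')) && trail E v' w' vs'
  | _, _ => false
  end.

Lemma trail_walk E v w vs : trail E v w vs -> walk E v w (last v vs).
Proof.
elim: w v vs => [|c w IH] v [|v' vs] //=.
by case/andP=> /eqP Ec /IH; rewrite Ec /= eqxx.
Qed.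

Lemma trail_src E v w vs c :
  trail E v w vs -> c \in w -> (E c).1 \in belast v vs.
Proof.
elim: w v vs => [|c' w IH] v [|v' vs] //= /andP[/eqP Ec' Ht].
rewrite inE => /orP[/eqP ->|cw]; first by rewrite Ec' mem_head.
by rewrite inE (IH _ _ Ht cw) orbT.
Qed.

Lemma trail_nth E v w vs : uniq w -> size vs = size w ->
  (forall c, c \in w ->
     E c = (nth v (v :: vs) (index c w), nth v vs (index c w))) ->
  trail E v w vs.
Proof.
elim: w v vs => [|c w IH] v [|v' vs] //= /andP[cw uw] [Hs] HE.
rewrite (HE c (mem_head _ _)) /= !eqxx /=; apply: IH => // c' c'w.
have ne : (c == c') = false by apply/negbTE; apply: contraNneq cw => ->.
rewrite (HE c' _) /= ?inE ?c'w ?orbT // ne /=.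
have Hi : (index c' w < size w)%N by rewrite index_mem.
congr (_, _); apply: set_nth_default => //=; rewrite Hs //.
by rewrite ltnS ltnW.
Qed.

Lemma trail_forced E v w vs l : trail E v w vs -> uniq (v :: vs) ->
  (forall c, c \notin w -> (E c).1 \notin belast v vs) ->
  walk E v l (last v vs) ->
  exists l', l = w ++ l' /\ walk E (last v vs) l' (last v vs).
Proof.
elim: w v vs l => [|c w IH] v [|v' vs] l //=; first by move=> _ _ _ H; exists l.
case/andP=> /eqP Ec Ht /andP[vnin Hu] Hout.
case: l => [|c' l] /=; first by move=> /eqP Hv; move: vnin; rewrite Hv mem_last.
case/andP=> /eqP Ec' Hw.
have cc' : c' = c.
  apply/eqP; apply: contraT => ne.
  have Hc'w : c' \in w.
    apply: contraT => nw; have := Hout c'.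
    by rewrite inE negb_or ne nw Ec' mem_head => /(_ isT).
  have := trail_src Ht Hc'w; rewrite Ec' => /mem_belast.
  by rewrite (negbTE vnin).
move: Ec' Hw; rewrite cc' Ec /= => _ Hw.
have Hout' c0 : c0 \notin w -> (E c0).1 \notin belast v' vs.
  move=> c0w; case: (c0 =P c) => [->|/eqP ne].
    by rewrite Ec /=; apply: contra vnin => /mem_belast.
  by have := Hout c0; rewrite inE negb_or ne c0w inE negb_or => /(_ isT) /andP[].
by have [l' [-> Hl']] := IH _ _ _ Ht Hu Hout' Hw; exists l'.
Qed.
End Trails.

Section CyclicMonomials.
Variable n : nat.
Implicit Types (m : quasi_mono n) (l w : seq 'I_n).

Definition tvars m : {set 'I_n} := [set i | m.1 i != None].
Definition src m i : 'I_n := if m.1 i is Some p then p.1 else i.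
Definition tgt m i : 'I_n := if m.1 i is Some p then p.2 else i.

(* m is cyclic when its coefficient is a product of traces of products of
   generic matrices: rows and columns are injective with a common image. *)
Definition cyclic_mono m : bool := [&& ml_mono m,
  [forall i in tvars m, forall j in tvars m, (src m i == src m j) ==> (i == j)],
  [forall i in tvars m, forall j in tvars m, (tgt m i == tgt m j) ==> (i == j)] &
  [forall i in tvars m, exists j in tvars m, src m j == tgt m i]].

Lemma ml_memC m i : ml_mono m -> (i \in m.2) = (i \notin tvars m).
Proof. by case/andP=> _ /forallP /(_ i) /eqP ->; rewrite inE negbK. Qed.

Lemma ml_uniq m : ml_mono m -> uniq m.2.
Proof. by case/andP. Qed.

Lemma ml_card m : ml_mono m -> (#|tvars m| + size m.2)%N = n.
Proof.
move=> Hm; have -> : tvars m = ~: [set i | i \in m.2].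
  by apply/setP=> i; rewrite !inE (ml_memC _ Hm) inE negbK.
have Hs : #|[set i | i \in m.2]| = size m.2.
  by rewrite cardsE; apply/card_uniqP/ml_uniq.
rewrite cardsCs card_ord setCK Hs subnK // -Hs.
by apply: leq_trans (max_card _) _; rewrite card_ord.
Qed.

Lemma m1_tvars m i : i \in tvars m -> m.1 i = Some (src m i, tgt m i).
Proof. by rewrite inE /src /tgt; case: (m.1 i) => [[]|]. Qed.

Lemma cyclic_monoP m : reflect
  [/\ ml_mono m, {in tvars m &, injective (src m)}, {in tvars m &, injective (tgt m)} &
     {in tvars m, forall i, exists2 j, j \in tvars m & src m j = tgt m i}]
  (cyclic_mono m).
Proof.
have injP (f : 'I_n -> 'I_n) : reflect {in tvars m &, injective f}
    [forall i in tvars m, forall j in tvars m, (f i == f j) ==> (i == j)].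
  apply: (iffP forall_inP) => [H i j Hi Hj Hf|H i Hi].
    by have /forall_inP/(_ j Hj) := H i Hi; rewrite Hf eqxx => /eqP.
  by apply/forall_inP => j Hj; apply/implyP => /eqP /H ->.
apply: (iffP and4P) => -[Hml /injP Hs /injP Ht Hx]; split => //.
  by move=> i /(forall_inP Hx) /exists_inP [j Hj /eqP]; exists j.
by apply/forall_inP => i /Hx [j Hj Hsj]; apply/exists_inP; exists j; rewrite ?Hsj.
Qed.

Lemma cyclic_ml m : cyclic_mono m -> ml_mono m. Proof. by case/cyclic_monoP. Qed.

Lemma cyclic_src_inj m : cyclic_mono m -> {in tvars m &, injective (src m)}.
Proof. by case/cyclic_monoP. Qed.

Lemma cyclic_tgt_inj m : cyclic_mono m -> {in tvars m &, injective (tgt m)}.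
Proof. by case/cyclic_monoP. Qed.

Definition tnext m i : 'I_n :=
  if i \in tvars m then odflt i [pick j in tvars m | src m j == tgt m i] else i.

Lemma tnext_out m i : i \notin tvars m -> tnext m i = i.
Proof. by rewrite /tnext => /negbTE ->. Qed.

Lemma tnextP m i : cyclic_mono m -> i \in tvars m ->
  tnext m i \in tvars m /\ src m (tnext m i) = tgt m i.
Proof.
move=> /cyclic_monoP[_ _ _ Hx] Hi; rewrite /tnext Hi.
case: pickP => [j /andP[Hj /eqP Hs]|] //=.
by have [j Hj Hs] := Hx i Hi => /(_ j); rewrite Hj Hs eqxx.
Qed.

Lemma tnext_eq m i j : cyclic_mono m -> i \in tvars m -> j \in tvars m ->
  src m j = tgt m i -> tnext m i = j.
Proof.
move=> Hg Hi Hj Hs; have [H1 H2] := tnextP Hg Hi.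
by apply: (cyclic_src_inj Hg) => //; rewrite H2.
Qed.

Lemma tnext_inj m : cyclic_mono m -> injective (tnext m).
Proof.
move=> Hg i j.
case: (boolP (i \in tvars m)) => Hi; case: (boolP (j \in tvars m)) => Hj.
- have [Ci Si] := tnextP Hg Hi; have [Cj Sj] := tnextP Hg Hj.
  by move=> E; apply: (cyclic_tgt_inj Hg) => //; rewrite -Si -Sj E.
- by have [Ci _] := tnextP Hg Hi; rewrite (tnext_out Hj) => E; move: Hj; rewrite -E Ci.
- by have [Cj _] := tnextP Hg Hj; rewrite (tnext_out Hi) => E; move: Hi; rewrite E Cj.
- by rewrite (tnext_out Hi) (tnext_out Hj).
Qed.

Lemma iter_tnext_tvars m x q : cyclic_mono m -> x \in tvars m ->
  iter q (tnext m) x \in tvars m.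
Proof. by move=> Hg Hx; elim: q => //= q IH; exact: (tnextP Hg IH).1. Qed.

Lemma orbit_tvars m k : cyclic_mono m -> k \in tvars m ->
  {subset fingraph.orbit (tnext m) k <= tvars m}.
Proof. by move=> Hg Hk x /trajectP [i _ ->]; apply: iter_tnext_tvars. Qed.

Lemma orbit_preim (T : finType) (f : T -> T) x y :
  injective f -> f y \in fingraph.orbit f x -> y \in fingraph.orbit f x.
Proof. by move=> inj; rewrite -!fconnect_orbit -(same_fconnect1_r inj). Qed.

(* Move the cycle of the trace variable k to the end of the word: this
   replaces the factor tr(x_k x_(tnext k) ...) by the word x_k x_(tnext k) ... *)
Definition open_cycle m k : quasi_mono n :=
  ([ffun i => if i \in fingraph.orbit (tnext m) k then None else m.1 i],
   m.2 ++ fingraph.orbit (tnext m) k).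

Lemma tvars_open m k :
  tvars (open_cycle m k) = tvars m :\: [set i | i \in fingraph.orbit (tnext m) k].
Proof. by apply/setP=> i; rewrite !inE ffunE; case: ifP. Qed.

Lemma tvars_openW m k i : i \in tvars (open_cycle m k) -> i \in tvars m.
Proof. by rewrite tvars_open inE => /andP[]. Qed.

Lemma src_open m k i : i \in tvars (open_cycle m k) -> src (open_cycle m k) i = src m i.
Proof. by rewrite tvars_open !inE /src ffunE => /andP[/negbTE -> _]. Qed.

Lemma tgt_open m k i : i \in tvars (open_cycle m k) -> tgt (open_cycle m k) i = tgt m i.
Proof. by rewrite tvars_open !inE /tgt ffunE => /andP[/negbTE -> _]. Qed.

Lemma card_tvars_open m k : k \in tvars m ->
  (#|tvars (open_cycle m k)| < #|tvars m|)%N.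
Proof.
move=> Hk; apply/proper_card/properP; split; first by apply/subsetP => i /tvars_openW.
by exists k => //; rewrite tvars_open !inE in_orbit.
Qed.

Lemma tnext_open_tvars m k i : cyclic_mono m -> i \in tvars (open_cycle m k) ->
  tnext m i \in tvars (open_cycle m k).
Proof.
move=> Hg Hi; have [C1 _] := tnextP Hg (tvars_openW Hi).
move: Hi; rewrite !tvars_open !in_setD C1 !inE andbT => /andP[Hio _].
by apply: contra Hio => /(orbit_preim (tnext_inj Hg)).
Qed.

Lemma open_cycle_cyclic m k : cyclic_mono m -> k \in tvars m ->
  cyclic_mono (open_cycle m k).
Proof.
move=> Hg Hk; have Hml := cyclic_ml Hg; have oC := orbit_tvars Hg Hk.
have Cp := @tvars_openW m k.
apply/cyclic_monoP; split.
- apply/andP; split.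
    rewrite cat_uniq (ml_uniq Hml) orbit_uniq andbT /=.
    by apply/hasPn=> x /oC; rewrite (ml_memC _ Hml) => ->.
  apply/forallP=> i; rewrite /= ffunE mem_cat; case: ifP => _; first by rewrite orbT.
  by rewrite orbF; case/andP: Hml => _ /forallP /(_ i).
- move=> i j Hi Hj; rewrite (src_open Hi) (src_open Hj).
  exact: (cyclic_src_inj Hg (Cp _ Hi) (Cp _ Hj)).
- move=> i j Hi Hj; rewrite (tgt_open Hi) (tgt_open Hj).
  exact: (cyclic_tgt_inj Hg (Cp _ Hi) (Cp _ Hj)).
- move=> i Hi; have C1' := tnext_open_tvars Hg Hi; exists (tnext m i) => //.
  by rewrite (src_open C1') (tgt_open Hi) (tnextP Hg (Cp _ Hi)).2.
Qed.

Lemma tnext_open m k i : cyclic_mono m -> k \in tvars m ->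
  i \in tvars (open_cycle m k) -> tnext (open_cycle m k) i = tnext m i.
Proof.
move=> Hg Hk Hi; have C1' := tnext_open_tvars Hg Hi.
apply: tnext_eq; rewrite ?open_cycle_cyclic //.
by rewrite (src_open C1') (tgt_open Hi) (tnextP Hg (tvars_openW Hi)).2.
Qed.
End CyclicMonomials.

Section AlternatingFunctions.
Variables (n : nat) (F : fieldType).
Implicit Types (m : quasi_mono n) (f : quasi_mono n -> F) (u o w : seq 'I_n).

Definition pure_word w : quasi_mono n := ([ffun _ => None], w).

Definition vanishes_acyclic f := forall m, ~~ cyclic_mono m -> f m = 0.
Definition alternating f :=
  forall m k, cyclic_mono m -> k \in tvars m -> f (open_cycle m k) = - f m.

(* The word u with the trace tr(x_o1 ... x_or) of the cycle o as coefficient. *)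
Definition cycle_mono u o : quasi_mono n :=
  ([ffun c => if c \in o then Some (c, next o c) else None], u).

Section OneCycle.
Variables u o : seq 'I_n.
Hypotheses (uniq_uo : uniq (u ++ o)) (full_uo : forall i, i \in u ++ o).

Let uniq_o : uniq o. Proof. by move: uniq_uo; rewrite cat_uniq => /and3P[]. Qed.

Lemma tvars_cycle_mono c : (c \in tvars (cycle_mono u o)) = (c \in o).
Proof. by rewrite inE ffunE; case: ifP. Qed.

Lemma src_cycle_mono c : c \in o -> src (cycle_mono u o) c = c.
Proof. by rewrite /src ffunE => ->. Qed.

Lemma tgt_cycle_mono c : c \in o -> tgt (cycle_mono u o) c = next o c.
Proof. by rewrite /tgt ffunE => ->. Qed.

Lemma cycle_mono_cyclic : cyclic_mono (cycle_mono u o).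
Proof.
move: uniq_uo; rewrite cat_uniq => /and3P[uu /hasPn dis _].
have uo' c : (c \in u) = (c \notin o).
  apply/idP/idP => [cu|co]; first by apply: contraL cu => /dis.
  by have := full_uo c; rewrite mem_cat (negbTE co) orbF.
apply/cyclic_monoP; split => [||i j|i].
- by apply/andP; split => //; apply/forallP=> c /=; rewrite ffunE uo'; case: ifP.
- by move=> i j; rewrite !tvars_cycle_mono => Hi Hj; rewrite !src_cycle_mono.
- rewrite !tvars_cycle_mono => Hi Hj; rewrite !tgt_cycle_mono // => H.
  by rewrite -(prev_next uniq_o i) H prev_next.
- rewrite tvars_cycle_mono => Hi; exists (next o i).
    by rewrite tvars_cycle_mono mem_next.
  by rewrite src_cycle_mono ?mem_next // tgt_cycle_mono.
Qed.

Lemma open_cycle_mono y : y \in o ->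
  open_cycle (cycle_mono u o) y = pure_word (u ++ rot (index y o) o).
Proof.
have Hcyc : fcycle (tnext (cycle_mono u o)) o.
  apply: cycle_from_next => // c co /=; apply/eqP/tnext_eq.
  - exact: cycle_mono_cyclic.
  - by rewrite tvars_cycle_mono.
  - by rewrite tvars_cycle_mono mem_next.
  - by rewrite src_cycle_mono ?mem_next // tgt_cycle_mono.
move=> yo; rewrite /open_cycle (fingraph.orbitE Hcyc uniq_o yo) /pure_word.
by congr (_, _); apply/ffunP=> c; rewrite !ffunE mem_rot; case: (c \in o).
Qed.

Lemma alternating_rot f x : alternating f -> x \in o ->
  f (pure_word (u ++ o)) = f (pure_word (u ++ rot (index x o) o)).
Proof.
move=> HR xo; case Eo: o xo => [//|y o'] xo; rewrite -Eo in xo *.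
have yo : y \in o by rewrite Eo mem_head.
have y0 : index y o = 0%N by rewrite Eo /= eqxx.
have Hg := cycle_mono_cyclic.
have := HR _ y Hg; rewrite tvars_cycle_mono open_cycle_mono // y0 rot0 => /(_ yo) ->.
by rewrite -(HR _ x Hg) ?tvars_cycle_mono ?open_cycle_mono.
Qed.
End OneCycle.

(* Repeated rotations reorder the tail of a pure word arbitrarily. *)
Lemma alternating_perm f : alternating f -> forall q u q', perm_eq q q' ->
  uniq (u ++ q) -> (forall i, i \in u ++ q) ->
  f (pure_word (u ++ q)) = f (pure_word (u ++ q')).
Proof.
move=> HR; elim=> [|x q1 IH] u q' Hp Hu Hc; first by case: q' Hp => // y q' /perm_size.
have xq' : x \in q' by rewrite -(perm_mem Hp) mem_head.
have Hp' : perm_eq (u ++ x :: q1) (u ++ q') by rewrite perm_cat2l.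
have Hu' : uniq (u ++ q') by rewrite -(perm_uniq Hp').
have Hc' i : i \in u ++ q' by rewrite -(perm_mem Hp').
rewrite (alternating_rot Hu' Hc' HR xq') (rot_index xq') -!cat_rcons.
apply: IH; rewrite ?cat_rcons //.
rewrite -(perm_cons x) -(rot_index xq'); apply: perm_trans Hp _.
by rewrite perm_sym perm_rot.
Qed.

Lemma alternating_tvars0 f m : alternating f -> cyclic_mono m ->
  tvars m = set0 -> f m = f (pure_word (enum 'I_n)).
Proof.
move=> HR Hg C0; have Hml := cyclic_ml Hg.
have mem2 i : i \in m.2 by rewrite (ml_memC _ Hml) C0 in_set0.
have -> : m = pure_word m.2.
  case: m Hg C0 {Hml mem2} => f0 w Hg C0; congr (_, _); apply/ffunP=> i.
  by rewrite ffunE; apply/eqP; apply: contraT => Hi; rewrite -(in_set0 i) -C0 inE.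
rewrite -[m.2]cat0s (alternating_perm HR (q' := enum 'I_n)) ?ml_uniq //.
by apply: uniq_perm; rewrite ?enum_uniq ?ml_uniq // => i; rewrite mem_enum mem2.
Qed.

(* An alternating function vanishing off cyclic monomials is determined by
   its value at the pure word x_1 ... x_n: induction on the number of trace
   variables, opening a cycle at each step. *)
Lemma alternating_eq0 f : vanishes_acyclic f -> alternating f ->
  f (pure_word (enum 'I_n)) = 0 -> forall m, f m = 0.
Proof.
move=> HZ HR H0 m; have [N leN] := ubnP #|tvars m|.
elim: N m leN => // N IH m; rewrite ltnS => HN.
have [Hg|/HZ//] := boolP (cyclic_mono m).
have [C0|[k Hk]] := set_0Vmem (tvars m); first by rewrite (alternating_tvars0 HR).
have := HR _ _ Hg Hk; rewrite IH; last exact: leq_trans (card_tvars_open Hk) HN.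
by move/eqP; rewrite eq_sym oppr_eq0 => /eqP.
Qed.
End AlternatingFunctions.

Section TrailUnits.
Variable n : nat.
Implicit Types (m : quasi_mono n) (l : seq 'I_n).

(* Units making the word of m a trail through the vertices v :: vs while
   keeping the commutative factors of m: the i-th letter of the word goes
   from the i-th to the (i+1)-th vertex. *)
Definition trail_units m v vs (c : 'I_n) : 'I_n * 'I_n :=
  if m.1 c is Some p then p
  else (nth v (v :: vs) (index c m.2), nth v vs (index c m.2)).

Lemma trail_units_tvar m v vs c :
  c \in tvars m -> trail_units m v vs c = (src m c, tgt m c).
Proof. by rewrite inE /trail_units /src /tgt; case: (m.1 c) => [[]|]. Qed.

Section Trail.
Variables (m : quasi_mono n) (v : 'I_n) (vs : seq 'I_n).
Hypotheses (m_ml : ml_mono m) (size_vs : size vs = size m.2).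
Local Notation E := (trail_units m v vs).

Lemma trail_units_trail : trail E v m.2 vs.
Proof.
apply: trail_nth => //; first exact: ml_uniq.
by move=> c; rewrite (ml_memC _ m_ml) inE negbK /trail_units => /eqP ->.
Qed.

Lemma mono_with_trail_units_cat l : {subset l <= tvars m} ->
  mono_with E (m.2 ++ l) = ([ffun c => if c \in l then None else m.1 c], m.2 ++ l).
Proof.
move=> lC; congr (_, _); apply/ffunP=> c; rewrite !ffunE mem_cat.
case: (boolP (c \in l)) => [/lC|] cl; rewrite ?orbT ?orbF //.
rewrite (ml_memC _ m_ml) /trail_units inE; case: (m.1 c) => //.
Qed.

Lemma mono_with_trail_units : mono_with E m.2 = m.
Proof.
rewrite -[m.2]cats0 mono_with_trail_units_cat // cats0.
by case: (m) => f w; congr (_, _); apply/ffunP => c; rewrite ffunE.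
Qed.

Lemma selects_trail_units_cat l : {subset l <= tvars m} ->
  walk E (last v vs) l (last v vs) -> selects E v (last v vs) (mono_with E (m.2 ++ l)).
Proof.
move=> lC Hw; rewrite selects_mono_with; apply: walk_cat Hw.
exact: trail_walk trail_units_trail.
Qed.

Lemma selects_trail_units : selects E v (last v vs) m.
Proof.
rewrite -[in X in selects _ _ _ X]mono_with_trail_units selects_mono_with.
exact: trail_walk trail_units_trail.
Qed.

Hypotheses (uniq_path : uniq (v :: vs))
  (src_off_path : forall c, c \in tvars m -> src m c \notin belast v vs).

Lemma selected_by_trail m' : ml_mono m' -> selects E v (last v vs) m' ->
  exists2 l, m' = mono_with E (m.2 ++ l) &
    [/\ uniq l, {subset l <= tvars m} & walk E (last v vs) l (last v vs)].
Proof.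
move=> Hm' /(selects_ml Hm') [Em' Hu Hw].
have Hout c : c \notin m.2 -> (E c).1 \notin belast v vs.
  by rewrite (ml_memC _ m_ml) negbK => Hc; rewrite trail_units_tvar // src_off_path.
have [l [El Hl]] := trail_forced trail_units_trail uniq_path Hout Hw.
move: Hu; rewrite El cat_uniq => /and3P[_ /hasPn Hdis ul].
exists l; first by rewrite Em' El.
split=> // d /Hdis; rewrite (ml_memC _ m_ml) negbK //.
Qed.
End Trail.
End TrailUnits.

Lemma enum_prefix_next (T : finType) (A : {set T}) k : (k < #|A|)%N ->
  exists L0 y, [/\ uniq (rcons L0 y), size L0 = k, {subset L0 <= A} & y \in A].
Proof.
move=> kA; have ks : (k < size (enum A))%N by rewrite -cardE.
have [x0 _] : exists x0 : T, x0 \in A by apply/card_gt0P; apply: leq_ltn_trans kA.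
exists (take k (enum A)), (nth x0 (enum A) k); split.
- by rewrite -take_nth // take_uniq ?enum_uniq.
- by rewrite size_take ks.
- by move=> x /mem_take; rewrite mem_enum.
- by rewrite -mem_enum mem_nth.
Qed.

Lemma rcons_headP (T : Type) (L0 : seq T) y : exists v vs,
  [/\ v :: vs = rcons L0 y, belast v vs = L0 & last v vs = y].
Proof.
case: L0 => [|x L0]; first by exists y, [::].
by exists x, (rcons L0 y); rewrite belast_rcons last_rcons.
Qed.

Lemma traject_orbit (T : finType) (f : T -> T) x q : (0 < q)%N ->
  uniq (traject f x q) -> iter q f x = x -> traject f x q = fingraph.orbit f x.
Proof.
case: q => // q _ Hu Hit.
have Hc : fcycle f (traject f x q.+1).
  rewrite trajectS /= -[x in rcons _ x]Hit iterSr -trajectSr.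
  exact: fpath_traject.
by rewrite (fingraph.orbitE Hc Hu) ?trajectS ?mem_head //= eqxx rot0.
Qed.

Section TraceVariableWalks.
Variable n : nat.
Implicit Types (m : quasi_mono n) (E : 'I_n -> 'I_n * 'I_n) (l : seq 'I_n).

Definition srcC m : {set 'I_n} := ~: (src m @: tvars m).
Definition tgtC m : {set 'I_n} := ~: (tgt m @: tvars m).

Lemma card_imset_tvarsC m (f : 'I_n -> 'I_n) : ml_mono m ->
  #|~: (f @: tvars m)| = (size m.2 + (#|tvars m| - #|f @: tvars m|))%N.
Proof.
move=> Hm; have := cardsC (f @: tvars m); rewrite card_ord => Hn.
apply/eqP; rewrite -(eqn_add2l #|f @: tvars m|) Hn addnCA.
by rewrite subnKC ?leq_imset_card // addnC ml_card.
Qed.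

Lemma card_imset_tvarsC_ge m (f : 'I_n -> 'I_n) : ml_mono m ->
  (size m.2 <= #|~: (f @: tvars m)|)%N.
Proof. by move=> Hm; rewrite card_imset_tvarsC // leq_addr. Qed.

Lemma card_imset_tvarsC_eq m (f : 'I_n -> 'I_n) : ml_mono m ->
  (#|~: (f @: tvars m)| == size m.2) = (#|f @: tvars m| == #|tvars m|).
Proof.
move=> Hm; rewrite card_imset_tvarsC // -{2}[size m.2]addn0 eqn_add2l subn_eq0.
by rewrite eqn_leq leq_imset_card.
Qed.

Lemma acyclic_free_column m : ml_mono m -> ~~ cyclic_mono m ->
  #|srcC m| = size m.2 -> exists2 y, y \in tgtC m & y \notin srcC m.
Proof.
move=> Hm Hng eA.
have Hsi : {in tvars m &, injective (src m)}.
  by apply/imset_injP; rewrite -card_imset_tvarsC_eq // -/(srcC m) eA.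
apply/exists_inP; apply: contraNT Hng => /exists_inPn HBA.
have sBA : tgtC m \subset srcC m by apply/subsetP => y /HBA; rewrite negbK.
have /eqP EBA : tgtC m == srcC m.
  by rewrite eqEcard sBA eA card_imset_tvarsC_ge.
have Eim : tgt m @: tvars m = src m @: tvars m by apply: setC_inj.
apply/cyclic_monoP; split => //.
  by apply/imset_injP; rewrite Eim; apply/imset_injP.
move=> i Hi; have : tgt m i \in tgt m @: tvars m by apply: imset_f.
by rewrite Eim => /imsetP [j Hj ->]; exists j.
Qed.

Lemma acyclic_trail m : ml_mono m -> ~~ cyclic_mono m ->
  exists L0 y, [/\ uniq (rcons L0 y), size L0 = size m.2, {subset L0 <= srcC m} &
    (y \in srcC m) || (y \in tgtC m)].
Proof.
move=> Hm Hng; have := card_imset_tvarsC_ge (src m) Hm; rewrite leq_eqVlt => /orP[/eqP eA|lt].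
  have [y yB yA] := acyclic_free_column Hm Hng (esym eA).
  exists (enum (srcC m)), y; split; rewrite ?yB ?orbT -?cardE //.
  - by rewrite rcons_uniq mem_enum yA enum_uniq.
  - by move=> x; rewrite mem_enum.
have [L0 [y [uL sL AL yA]]] := enum_prefix_next lt.
by exists L0, y; rewrite yA.
Qed.

Variables (m : quasi_mono n) (E : 'I_n -> 'I_n * 'I_n).
Hypothesis E_tvars : forall c, c \in tvars m -> E c = (src m c, tgt m c).

Lemma closed_walk_tvars y c l : {subset c :: l <= tvars m} ->
  walk E y (c :: l) y -> y \notin srcC m /\ y \notin tgtC m.
Proof.
move=> lC Hw; rewrite !inE !negbK.
have Hc : c \in tvars m := lC c (mem_head _ _).
have Hd : last c l \in tvars m := lC _ (mem_last _ _).
split; first by move: Hw => /= /andP[/eqP <- _]; rewrite E_tvars //= imset_f.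
by move: Hw; rewrite lastI => /walk_last; rewrite E_tvars // => /= <-; apply: imset_f.
Qed.

Hypothesis m_cyclic : cyclic_mono m.

Lemma walk_tvars x l b : x \in tvars m -> {subset l <= tvars m} ->
  walk E (src m x) l b ->
  l = traject (tnext m) x (size l) /\ b = src m (iter (size l) (tnext m) x).
Proof.
elim: l x => [|c l IH] x Hx Hl /=; first by move/eqP.
have Hc : c \in tvars m by apply: Hl; rewrite mem_head.
rewrite E_tvars //= => /andP[/eqP Hs Hw].
have cx : c = x by apply: (cyclic_src_inj m_cyclic).
subst c; have [Cn Sn] := tnextP m_cyclic Hx; rewrite -Sn in Hw.
have Hl' : {subset l <= tvars m} by move=> y yl; apply: Hl; rewrite inE yl orbT.
have [-> ->] := IH (tnext m x) Cn Hl' Hw.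
by rewrite size_traject -iterSr iterS.
Qed.

Lemma walk_tvars_traject x q : x \in tvars m ->
  walk E (src m x) (traject (tnext m) x q) (src m (iter q (tnext m) x)).
Proof.
elim: q x => [|q IH] x Hx /=; first by rewrite eqxx.
rewrite E_tvars //= eqxx /=; have [Cn Sn] := tnextP m_cyclic Hx.
by rewrite -Sn -iterS iterSr; apply: IH.
Qed.

Lemma walk_orbit k : k \in tvars m ->
  walk E (src m k) (fingraph.orbit (tnext m) k) (src m k).
Proof.
move=> Hk; have := walk_tvars_traject (fingraph.order (tnext m) k) Hk.
by rewrite (fingraph.iter_order (tnext_inj m_cyclic)).
Qed.

Lemma closed_walk_cyclic k l : k \in tvars m -> {subset l <= tvars m} -> uniq l ->
  walk E (src m k) l (src m k) -> l = [::] \/ l = fingraph.orbit (tnext m) k.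
Proof.
move=> Hk lC ul Hw; have [El Hit] := walk_tvars Hk lC Hw.
have {}Hit : iter (size l) (tnext m) k = k.
  by apply: (cyclic_src_inj m_cyclic) => //; apply: iter_tnext_tvars.
case: (posnP (size l)) => [/eqP|] Hs; first by left; apply/nilP.
by right; rewrite El; apply: traject_orbit => //; rewrite -El.
Qed.
End TraceVariableWalks.

Section QuasiIdentities.
Variables (n : nat) (F : fieldType) (P : quasi_poly F n).
Hypotheses (P_ml : quasi_multilinear P) (P_qid : quasi_identity P).

Lemma qid_coef_nonml m : ~~ ml_mono m -> quasi_coef P m = 0.
Proof.
move=> Hm; rewrite /quasi_coef big_seq_cond big1 // => t /andP[tP /eqP Et].
by move: Hm; rewrite -Et (allP P_ml _ tP).
Qed.

(* (Z): along a trail for an acyclic m, m is the only selected monomial. *)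
Lemma qid_vanishes_acyclic : vanishes_acyclic (quasi_coef P).
Proof.
move=> m Hng; have [Hm|/qid_coef_nonml//] := boolP (ml_mono m).
have [L0 [y [uL sL AL yAB]]] := acyclic_trail Hm Hng.
have [v [vs [Evs Hb Hl]]] := rcons_headP L0 y.
have Hsz : size vs = size m.2 by have := congr1 size Evs; rewrite size_rcons sL => -[].
have Huv : uniq (v :: vs) by rewrite Evs.
have Hoff c : c \in tvars m -> src m c \notin belast v vs.
  by move=> Hc; rewrite Hb; apply: contraL (imset_f (src m) Hc) => /AL; rewrite inE.
set E := trail_units m v vs.
have E_tvars c : c \in tvars m -> E c = (src m c, tgt m c) by apply: trail_units_tvar.
have := @qid_selected_sum _ _ P E v (last v vs) [:: m] P_ml P_qid isT.
rewrite big_seq1; apply=> m' Hm'; rewrite inE; apply/idP/eqP => [Hsel|->].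
  have [[|c l] -> [_ lC Hw]] := selected_by_trail Hm Hsz Huv Hoff Hm' Hsel.
    by rewrite cats0 mono_with_trail_units.
  by move: yAB; rewrite -Hl; case: (closed_walk_tvars E_tvars lC Hw) => /negbTE -> /negbTE ->.
exact: selects_trail_units.
Qed.

(* (R): for cyclic m, a trail through the unused rows ending at the row of k
   selects exactly m and open_cycle m k. *)
Lemma qid_alternating : alternating (quasi_coef P).
Proof.
move=> m k Hg Hk; have Hm := cyclic_ml Hg.
have eA : #|srcC m| = size m.2.
  by apply/eqP; rewrite card_imset_tvarsC_eq //; apply/imset_injP/cyclic_src_inj.
have yA : src m k \notin enum (srcC m) by rewrite mem_enum inE negbK imset_f.
have [v [vs [Evs Hb Hl]]] := rcons_headP (enum (srcC m)) (src m k).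
have Hsz : size vs = size m.2.
  by have := congr1 size Evs; rewrite size_rcons -cardE eA => -[].
have Huv : uniq (v :: vs) by rewrite Evs rcons_uniq yA enum_uniq.
have Hoff c : c \in tvars m -> src m c \notin belast v vs.
  by move=> Hc; rewrite Hb mem_enum inE negbK imset_f.
set E := trail_units m v vs; set o := fingraph.orbit (tnext m) k.
have E_tvars c : c \in tvars m -> E c = (src m c, tgt m c) by apply: trail_units_tvar.
have oC : {subset o <= tvars m} := orbit_tvars Hg Hk.
have Hopen : mono_with E (m.2 ++ o) = open_cycle m k by rewrite mono_with_trail_units_cat.
have Hne : m != open_cycle m k.
  apply/negP => /eqP /(congr1 (fun x => size x.2)) /eqP.
  rewrite size_cat -{1}[size m.2]addn0 eqn_add2l fingraph.size_orbit eq_sym.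
  by rewrite eqn0Ngt fingraph.order_gt0.
have := @qid_selected_sum _ _ P E v (last v vs) [:: m; open_cycle m k] P_ml P_qid.
rewrite /= inE Hne big_cons big_seq1 => /(_ isT) H.
apply/eqP; rewrite -addr_eq0 addrC H // => m' Hm'; rewrite !inE.
apply/idP/orP => [Hsel|[/eqP->|/eqP->]]; last 2 first.
- exact: selects_trail_units.
- by rewrite -Hopen selects_trail_units_cat // Hl walk_orbit.
have [l -> [ul lC Hw]] := selected_by_trail Hm Hsz Huv Hoff Hm' Hsel.
rewrite Hl in Hw; case: (closed_walk_cyclic E_tvars Hg Hk lC ul Hw) => ->.
  by left; rewrite cats0 mono_with_trail_units.
by right; rewrite Hopen.
Qed.
End QuasiIdentities.

Section CycleWord.
Variable n : nat.
(* {1, .., n} inside {1, .., n+1}, and the point n+1. *)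
Local Notation wd := (@widen_ord n n.+1 (leqnSn n)).
Local Notation mx := (@ord_max n).
Local Notation narrow := (fun x : 'I_n.+1 => (insub (val x) : option 'I_n)).
Implicit Types (s : 'S_n.+1) (w : seq 'I_n).

Lemma wd_inj : injective wd.
Proof. by move=> i j /(congr1 val) /= /val_inj. Qed.

Lemma wd_mx i : (wd i == mx) = false.
Proof. by apply/negbTE; rewrite -val_eqE /= neq_ltn ltn_ord. Qed.

Lemma wd_insub (x : 'I_n.+1) : x != mx -> exists i, x = wd i.
Proof.
move=> Hx; have Hlt : (val x < n)%N.
  have := ltn_ord x; rewrite ltnS leq_eqVlt => /orP[/eqP Ex|//].
  by move: Hx; rewrite -val_eqE /= Ex eqxx.
by exists (Ordinal Hlt); apply: val_inj.
Qed.

Lemma narrow_mx : narrow mx = None.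
Proof. by apply: insubF; rewrite /= ltnn. Qed.

Lemma narrow_wd i : narrow (wd i) = Some i.
Proof. by rewrite /= valK. Qed.

Lemma map_wd_pmap (l : seq 'I_n.+1) : mx \notin l -> map wd (pmap narrow l) = l.
Proof.
elim: l => //= x l IH; rewrite inE negb_or eq_sym => /andP[/wd_insub [i ->] Hl].
by rewrite narrow_wd /= IH.
Qed.

(* The cycle through n+1, as a sequence starting at n+1. *)
Definition head_seq w : seq 'I_n.+1 := mx :: map wd w.

Lemma head_seq_uniq w : uniq w -> uniq (head_seq w).
Proof.
move=> Hu; rewrite /= (map_inj_uniq wd_inj) Hu andbT.
by apply/mapP => [[i _ /eqP]]; rewrite eq_sym wd_mx.
Qed.

Lemma cycle_word_orbit s :
  fingraph.orbit (fun x => s x) mx = head_seq (cycle_word s).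
Proof.
have Eo : fingraph.orbit (fun x => s x) mx =
    mx :: traject (fun x => s x) (s mx) (fingraph.order (fun x => s x) mx).-1.
  by rewrite /fingraph.orbit -fingraph.orderSpred trajectS.
have := fingraph.orbit_uniq (fun x => s x) mx; rewrite Eo => /= /andP[Hn _].
by rewrite /cycle_word Eo [pmap _ _]/= narrow_mx /head_seq /= map_wd_pmap.
Qed.

Lemma cycle_word_fcycle s : fcycle (fun x => s x) (head_seq (cycle_word s)).
Proof. by rewrite -cycle_word_orbit; apply: fingraph.cycle_orbit; apply: perm_inj. Qed.

Lemma cycle_word_uniq s : uniq (cycle_word s).
Proof.
have := fingraph.orbit_uniq (fun x => s x) mx; rewrite cycle_word_orbit /= => /andP[_].
by rewrite (map_inj_uniq wd_inj).
Qed.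

Lemma fcycle_cycle_word s w : uniq w ->
  fcycle (fun x => s x) (head_seq w) -> cycle_word s = w.
Proof.
move=> Hu Hc; have := fingraph.orbitE Hc (head_seq_uniq Hu) (mem_head _ _).
rewrite /= eqxx rot0 /cycle_word => -> /=; rewrite narrow_mx.
by elim: w {Hu Hc} => //= i w ->; rewrite narrow_wd.
Qed.

Lemma mem_cycle_word s i :
  (i \in cycle_word s) = (wd i \in fingraph.orbit (fun x => s x) mx).
Proof. by rewrite cycle_word_orbit inE wd_mx /= (mem_map wd_inj). Qed.
End CycleWord.

Section QnCoefficients.
Variables (n : nat) (F : fieldType).
Implicit Types (s : 'S_n.+1) (m : quasi_mono n).

(* The only row assignment j for which phi_mono s j can equal m. *)
Definition row_of m : {ffun 'I_n -> 'I_n} := [ffun i => src m i].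

Definition in_phi s m : bool :=
  (phi_mono s (row_of m) == m) && phi_index_ok s (row_of m).

Lemma in_phi_row s m (j : {ffun 'I_n -> 'I_n}) :
  phi_index_ok s j && (phi_mono s j == m) = (j == row_of m) && in_phi s m.
Proof.
apply/idP/idP; last by case/andP => /eqP -> /andP[-> ->].
case/andP=> Hok /eqP Hm.
have Ej : j = row_of m.
  apply/ffunP=> i; rewrite /row_of ffunE /src -Hm /phi_mono /= ffunE.
  by case: ifP => // Hi; move/forallP: Hok => /(_ i); rewrite Hi => /eqP.
by rewrite /in_phi -Ej Hm !eqxx Hok.
Qed.

Lemma coef_Qn m : quasi_coef (Qn F n) m =
  \sum_(s : 'S_n.+1) (-1) ^+ odd_perm s * (in_phi s m)%:R.
Proof.
rewrite /quasi_coef /Qn big_flatten /= big_map big_enum /=.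
rewrite [RHS](eq_bigl (fun s => s \in [set: 'S_n.+1])) => [|s]; last by rewrite inE.
apply: eq_bigr => s _.
rewrite big_map /phi big_map big_filter_cond big_enum_cond /=.
rewrite (eq_bigl (fun j => (j == row_of m) && in_phi s m)) => [|j]; last by rewrite in_phi_row.
rewrite -big_distrr /=; congr (_ * _).
case: (in_phi s m); last by rewrite big_pred0 // => j; rewrite andbF.
by rewrite (eq_bigl (pred1 (row_of m))) => [|j]; rewrite ?big_pred1_eq ?andbT.
Qed.
End QnCoefficients.

Lemma signed_count_tperm (F : fieldType) (T : finType) (A : pred {perm T}) x y :
  [pchar F] =i pred0 -> x != y -> (forall s, A (s * tperm x y)%g = A s) ->
  \sum_(s : {perm T}) (-1) ^+ odd_perm s * (A s)%:R = 0 :> F.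
Proof.
move=> charF0 xy At; set S := \sum_s _.
have HS : S = - S.
  rewrite {1}/S (reindex_inj (@mulIg _ (tperm x y))) /= -sumrN.
  apply: eq_bigr => s _; rewrite At odd_permM odd_tperm xy signr_addb /=.
  by rewrite mulrN1 mulNr.
have : S *+ 2 = 0 by rewrite mulr2n {2}HS subrr.
have /pcharf0P char0 := charF0.
by rewrite -mulr_natr => /eqP; rewrite mulf_eq0 char0 orbF => /eqP.
Qed.

Section QnAcyclic.
Variables (n : nat) (F : fieldType).
Local Notation wd := (@widen_ord n n.+1 (leqnSn n)).
Local Notation mx := (@ord_max n).
Implicit Types (s : 'S_n.+1) (m : quasi_mono n).

Lemma perm_on_small_wd s i : s (wd i) != mx -> wd (perm_on_small s i) = s (wd i).
Proof.
move=> /wd_insub [j Ej]; apply: val_inj.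
by rewrite /= /perm_on_small Ej val_insubd /= ltn_ord.
Qed.

Lemma insubd_wd (i j : 'I_n) : insubd i (val (wd j)) = j.
Proof. by apply: val_inj; rewrite val_insubd /= ltn_ord. Qed.

Lemma in_phiP s m : in_phi s m ->
  [/\ ml_mono m, cycle_word s = m.2 &
   forall i, i \in tvars m -> [/\ wd (perm_on_small s i) = s (wd i),
     perm_on_small s i \in tvars m & tgt m i = src m (perm_on_small s i)]].
Proof.
case/andP => /eqP Hm _.
have E2 : cycle_word s = m.2 by rewrite -Hm.
have E1 i : m.1 i = if i \in cycle_word s then None
                   else Some (row_of m i, row_of m (perm_on_small s i)).
  by rewrite -[in LHS]Hm /= ffunE.
have Hml : ml_mono m.
  apply/andP; split; first by rewrite -E2 cycle_word_uniq.
  by apply/forallP => i; rewrite E1 -E2; case: ifP.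
split => // i Hi.
have Hic : i \notin cycle_word s by move: Hi; rewrite inE E1; case: ifP.
have Hno : s (wd i) \notin fingraph.orbit (fun x => s x) mx.
  by apply: contra Hic => H; rewrite mem_cycle_word; exact: (orbit_preim (@perm_inj _ s) H).
have Hp : wd (perm_on_small s i) = s (wd i).
  by apply: perm_on_small_wd; apply: contraNneq Hno => ->; apply: fingraph.in_orbit.
split => //; last by rewrite /tgt E1 (negbTE Hic) /= /row_of ffunE.
by rewrite -[_ \in tvars m]negbK -(ml_memC _ Hml) -E2 mem_cycle_word Hp.
Qed.

Lemma in_phi_tperm s m k l : in_phi s m -> k \in tvars m -> l \in tvars m ->
  src m k = src m l -> in_phi (s * tperm (wd k) (wd l)) m.
Proof.
move=> Hs Hk Hl Hkl; have [Hml E2 HC] := in_phiP Hs.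
set t := tperm (wd k) (wd l).
have notin_head i : i \in tvars m -> wd i \notin head_seq m.2.
  by move=> Hi; rewrite inE wd_mx /= (mem_map (@wd_inj n)) (ml_memC _ Hml) negbK.
have Hcyc : fcycle (fun x => s x) (head_seq m.2) by rewrite -E2; apply: cycle_word_fcycle.
have Hcyc' : fcycle (fun x => (s * t)%g x) (head_seq m.2).
  rewrite (@eq_in_cycle _ (mem (head_seq m.2)) _ (frel (fun x => s x))) //; last by apply/allP.
  move=> x y xp _ /=; rewrite permM /t tpermD //.
    by apply: contraNneq (notin_head _ Hk) => ->; apply: (mem_fcycle Hcyc).
  by apply: contraNneq (notin_head _ Hl) => ->; apply: (mem_fcycle Hcyc).
have E2' : cycle_word (s * t)%g = m.2 by apply: fcycle_cycle_word => //; exact: ml_uniq.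
have Hrow i : src m (perm_on_small (s * t)%g i) = src m (perm_on_small s i).
  rewrite /perm_on_small permM /t.
  case: (s (wd i) =P wd k) => [->|/eqP nk]; first by rewrite tpermL !insubd_wd Hkl.
  case: (s (wd i) =P wd l) => [->|/eqP nl]; first by rewrite tpermR !insubd_wd Hkl.
  by rewrite tpermD // eq_sym.
case/andP: Hs => /eqP Hm Hok; apply/andP; split.
  apply/eqP; rewrite -[RHS]Hm /phi_mono E2' E2; congr (_, _).
  by apply/ffunP => i; rewrite !ffunE Hrow.
by move: Hok; rewrite /phi_index_ok E2' E2.
Qed.

Lemma in_phi_cyclic_mono s m : in_phi s m ->
  {in tvars m &, injective (src m)} -> cyclic_mono m.
Proof.
move=> Hs Hsi; have [Hml _ HC] := in_phiP Hs.
apply/cyclic_monoP; split=> // [a b Ha Hb Hab|a Ha].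
  have [Pa Ca Ta] := HC a Ha; have [Pb Cb Tb] := HC b Hb.
  have Epos : perm_on_small s a = perm_on_small s b by apply: Hsi; rewrite // -Ta -Tb.
  by apply: (@wd_inj n); apply: (@perm_inj _ s); rewrite -Pa -Pb Epos.
by have [_ Ca Ta] := HC a Ha; exists (perm_on_small s a).
Qed.

(* (Z) for Q_n: off cyclic monomials the terms of Q_n cancel in pairs. *)
Lemma Qn_vanishes_acyclic : [pchar F] =i pred0 ->
  vanishes_acyclic (quasi_coef (Qn F n)).
Proof.
move=> charF0 m Hng; rewrite coef_Qn.
have [Hsi|] := boolP [forall k in tvars m, forall l in tvars m,
                      (src m k == src m l) ==> (k == l)].
  rewrite big1 // => s _; case H: (in_phi s m); rewrite ?mulr0 //.
  case/negP: Hng; apply: (in_phi_cyclic_mono H) => a b Ha Hb Hab.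
  by move/forall_inP: Hsi => /(_ a Ha) /forall_inP /(_ b Hb); rewrite Hab eqxx => /eqP.
case/forall_inPn => k Hk /forall_inPn [l Hl]; rewrite negb_imply => /andP[/eqP Hkl Hne].
apply: (@signed_count_tperm _ _ (fun s => in_phi s m) (wd k) (wd l) charF0).
  by rewrite (inj_eq (@wd_inj n)).
move=> s; apply/idP/idP => [H|H]; last exact: in_phi_tperm.
by have := in_phi_tperm H Hk Hl Hkl; rewrite -mulgA tperm2 mulg1.
Qed.
End QnAcyclic.

Lemma fpath_tpermD (T : finType) (f : T -> T) x p u v :
  fpath f x p -> u \notin p -> v \notin p -> fpath (fun z => tperm u v (f z)) x p.
Proof.
elim: p x => //= z p IH x /andP[/eqP <- Hp].
rewrite !inE !negb_or => /andP[nu up] /andP[nv vp].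
by rewrite tpermD // eqxx IH.
Qed.

Lemma fcycle_merge (T : finType) (f : T -> T) x a y b :
  uniq (x :: a ++ y :: b) -> fcycle f (x :: a) -> fcycle f (y :: b) ->
  fcycle (fun z => tperm x y (f z)) (x :: a ++ y :: b).
Proof.
move=> Hu; have xa : x \notin a by apply: contraL Hu => xa; rewrite /= mem_cat xa.
have xb : x \notin b by apply: contraL Hu => xb; rewrite /= mem_cat inE xb !orbT.
have ya : y \notin a.
  by apply: contraL Hu => ya; rewrite /= cat_uniq /= ya !andbF.
have yb : y \notin b by move: Hu; rewrite /= cat_uniq /= => /and4P[_ _ _ /andP[]].
move=> Ca Cb.
have /andP[Pa /eqP La] : fpath f x a && (f (last x a) == x) by rewrite -rcons_path.
have /andP[Pb /eqP Lb] : fpath f y b && (f (last y b) == y) by rewrite -rcons_path.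
rewrite /= rcons_cat cat_path /= rcons_path /= La tpermL Lb tpermR !eqxx !andbT.
by rewrite !fpath_tpermD.
Qed.

Section QnCyclic.
Variables (n : nat) (F : fieldType).
Local Notation wd := (@widen_ord n n.+1 (leqnSn n)).
Local Notation mx := (@ord_max n).
Implicit Types (s : 'S_n.+1) (m : quasi_mono n).

(* The permutation of {1, .., n+1} attached to a cyclic m: its cycle through
   n+1 is n+1 followed by the word of m, its other cycles those of tnext. *)
Definition mono_perm m (x : 'I_n.+1) : 'I_n.+1 :=
  if x \in head_seq m.2 then next (head_seq m.2) x
  else if (insub (val x) : option 'I_n) is Some i then wd (tnext m i) else x.

Lemma mono_perm_in m x : x \in head_seq m.2 -> mono_perm m x = next (head_seq m.2) x.
Proof. by rewrite /mono_perm => ->. Qed.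

Lemma mono_perm_out m i : wd i \notin head_seq m.2 -> mono_perm m (wd i) = wd (tnext m i).
Proof. by rewrite /mono_perm => /negbTE ->; rewrite valK. Qed.

Lemma head_seq_wd m i : ml_mono m -> (wd i \in head_seq m.2) = (i \notin tvars m).
Proof. by move=> Hml; rewrite inE wd_mx /= (mem_map (@wd_inj n)) (ml_memC _ Hml). Qed.

Lemma wd_tvarsP m x : ml_mono m -> x \notin head_seq m.2 ->
  exists2 i, x = wd i & i \in tvars m.
Proof.
move=> Hml xp; have /wd_insub [i Ex] : x != mx.
  by apply: contraNneq xp => ->; exact: mem_head.
by exists i; rewrite // -[_ \in _]negbK -head_seq_wd // -Ex.
Qed.

Lemma mono_perm_inj m : cyclic_mono m -> injective (mono_perm m).
Proof.
move=> Hg; have Hml := cyclic_ml Hg.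
have hu : uniq (head_seq m.2) by apply/head_seq_uniq/ml_uniq.
have out_out x : x \notin head_seq m.2 -> mono_perm m x \notin head_seq m.2.
  case/(wd_tvarsP Hml) => i -> Hi.
  by rewrite mono_perm_out ?head_seq_wd ?negbK ?(tnextP Hg Hi).1.
move=> x y; case: (boolP (x \in head_seq m.2)) => xp; case: (boolP (y \in head_seq m.2)) => yp.
- by rewrite !mono_perm_in //; apply: (can_inj (prev_next hu)).
- by move=> E; move: (out_out _ yp); rewrite -E mono_perm_in // mem_next xp.
- by move=> E; move: (out_out _ xp); rewrite E mono_perm_in // mem_next yp.
case/(wd_tvarsP Hml): xp => i -> Hi; case/(wd_tvarsP Hml): yp => j -> Hj.
rewrite !mono_perm_out ?head_seq_wd ?negbK //.
by move/(@wd_inj n)/(tnext_inj Hg) ->.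
Qed.

Lemma in_phi_mono_perm s m : cyclic_mono m ->
  in_phi s m = [forall x, s x == mono_perm m x].
Proof.
move=> Hg; have Hml := cyclic_ml Hg.
have hu : uniq (head_seq m.2) by apply/head_seq_uniq/ml_uniq.
apply/idP/forallP => [H x|H].
  have [_ E2 HC] := in_phiP H.
  have Hcyc : fcycle (fun x => s x) (head_seq m.2) by rewrite -E2; apply: cycle_word_fcycle.
  case: (boolP (x \in head_seq m.2)) => xp; first by rewrite mono_perm_in // (nextE Hcyc xp).
  case/(wd_tvarsP Hml): xp => i -> Hi; have [Hp Hc Ht] := HC i Hi.
  by rewrite mono_perm_out ?head_seq_wd ?negbK // -Hp (tnext_eq Hg Hi Hc (esym Ht)).
have Hcyc : fcycle (fun x => s x) (head_seq m.2).
  by apply: cycle_from_next => // x xp; rewrite /= (eqP (H x)) mono_perm_in.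
have E2 : cycle_word s = m.2 by apply: fcycle_cycle_word; [exact: ml_uniq | exact: Hcyc].
apply/andP; split.
  apply/eqP; rewrite [RHS]surjective_pairing /phi_mono E2; congr (_, _).
  apply/ffunP => i; rewrite !ffunE (ml_memC _ Hml); case: ifP => Hi.
    by move: Hi; rewrite inE negbK => /eqP ->.
  move/negbT: Hi; rewrite negbK => Hi.
  have Hs : s (wd i) = wd (tnext m i) by rewrite (eqP (H _)) mono_perm_out // head_seq_wd // Hi.
  by rewrite /perm_on_small Hs insubd_wd (tnextP Hg Hi).2 m1_tvars.
apply/forallP => i; rewrite E2 (ml_memC _ Hml); apply/implyP => Hi.
by rewrite /row_of ffunE /src; move: Hi; rewrite inE negbK => /eqP ->.
Qed.

Lemma coef_Qn_cyclic m (Hg : cyclic_mono m) :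
  quasi_coef (Qn F n) m = (-1) ^+ odd_perm (perm (mono_perm_inj Hg)).
Proof.
rewrite coef_Qn (bigD1 (perm (mono_perm_inj Hg))) //= big1 ?addr0.
  rewrite in_phi_mono_perm //; have -> : [forall x, perm (mono_perm_inj Hg) x == mono_perm m x].
    by apply/forallP => x; rewrite permE.
  by rewrite mulr1.
move=> s Hs; rewrite in_phi_mono_perm //; case: forallP => [H|]; rewrite ?mulr0 //.
by case/negP: Hs; apply/eqP/permP => x; rewrite permE; apply/eqP.
Qed.
End QnCyclic.

Section QnAlternating.
Variables (n : nat) (F : fieldType).
Local Notation wd := (@widen_ord n n.+1 (leqnSn n)).
Local Notation mx := (@ord_max n).
Implicit Types (m : quasi_mono n).

(* Opening the cycle of k merges it with the cycle of n+1: mono_perm is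
   composed with the transposition (n+1, k). *)
Lemma mono_perm_open m k : cyclic_mono m -> k \in tvars m ->
  forall x, mono_perm (open_cycle m k) x = tperm mx (wd k) (mono_perm m x).
Proof.
move=> Hg Hk; have Hml := cyclic_ml Hg; have Hg' := open_cycle_cyclic Hg Hk.
set o := fingraph.orbit (tnext m) k.
have [o' Eo] : exists o', o = k :: o'.
  by exists (traject (tnext m) (tnext m k) (fingraph.order (tnext m) k).-1);
     rewrite /o /fingraph.orbit -fingraph.orderSpred trajectS.
have Ehead : head_seq (open_cycle m k).2 = mx :: map wd m.2 ++ wd k :: map wd o'.
  by rewrite /head_seq /= map_cat -/o Eo.
have hu' : uniq (head_seq (open_cycle m k).2) by apply/head_seq_uniq/ml_uniq/cyclic_ml.
have C1 : fcycle (mono_perm m) (mx :: map wd m.2).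
  apply: cycle_from_next; first exact/head_seq_uniq/ml_uniq.
  by move=> x xp; rewrite /= mono_perm_in.
have C2 : fcycle (mono_perm m) (wd k :: map wd o').
  rewrite -map_cons -Eo cycle_map (@eq_in_cycle _ (mem (tvars m)) _ (frel (tnext m))).
  - exact/fingraph.cycle_orbit/tnext_inj.
  - by move=> i j Hi _; rewrite /= mono_perm_out ?head_seq_wd ?negbK // (inj_eq (@wd_inj n)).
  - by apply/allP => i /(orbit_tvars Hg Hk).
have Hc : fcycle (fun x => tperm mx (wd k) (mono_perm m x)) (head_seq (open_cycle m k).2).
  by rewrite Ehead; apply: fcycle_merge; rewrite // -Ehead.
move=> x; case: (boolP (x \in head_seq (open_cycle m k).2)) => xp.
  by rewrite mono_perm_in // (nextE Hc xp).
case/(wd_tvarsP (cyclic_ml Hg')): xp => i -> Hi.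
have Hi0 := tvars_openW Hi; have Hn := tnext_open_tvars Hg Hi.
rewrite mono_perm_out ?head_seq_wd ?negbK ?cyclic_ml // (tnext_open Hg Hk Hi).
rewrite mono_perm_out ?head_seq_wd ?negbK // tpermD // 1?eq_sym ?wd_mx //.
rewrite (inj_eq (@wd_inj n)); apply: contraTneq Hn => ->.
by rewrite tvars_open !inE fingraph.in_orbit.
Qed.

Lemma Qn_alternating : alternating (quasi_coef (Qn F n)).
Proof.
move=> m k Hg Hk; have Hg' := open_cycle_cyclic Hg Hk.
rewrite !coef_Qn_cyclic.
have -> : perm (mono_perm_inj Hg') = (perm (mono_perm_inj Hg) * tperm mx (wd k))%g.
  apply/permP => x; rewrite permM (permE (mono_perm_inj Hg')) (permE (mono_perm_inj Hg)).
  exact: mono_perm_open.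
by rewrite odd_permM odd_tperm eq_sym wd_mx signr_addb mulrN1.
Qed.

Lemma coef_Qn_pure_word : quasi_coef (Qn F n) (pure_word (enum 'I_n)) != 0.
Proof.
have Hg : cyclic_mono (pure_word (enum 'I_n)).
  apply/cyclic_monoP; split => [|i j|i j|i]; rewrite ?inE ?ffunE //.
  by apply/andP; split; [exact: enum_uniq | apply/forallP => i; rewrite mem_enum ffunE].
by rewrite (coef_Qn_cyclic F Hg) signr_eq0.
Qed.
End QnAlternating.

(* With a fixed by the pure word, coef P - a coef Q_n satisfies (Z) and (R)
   and vanishes at the pure word, hence everywhere. *)
Theorem mainTheorem18 (F : fieldType) (charF0 : [pchar F] =i pred0)
  (n : nat) (P : quasi_poly F n) :
  quasi_multilinear P -> quasi_identity P ->
  exists a : F, forall m : quasi_mono n, quasi_coef P m = a * quasi_coef (Qn F n) m.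
Proof.
move=> P_ml P_qid; set w0 := pure_word (enum 'I_n).
set a := quasi_coef P w0 / quasi_coef (Qn F n) w0.
exists a => m; apply/eqP; rewrite -subr_eq0; apply/eqP; move: m.
apply: (@alternating_eq0 n F (fun m => quasi_coef P m - a * quasi_coef (Qn F n) m)).
- move=> m Hm; rewrite (qid_vanishes_acyclic P_ml P_qid) // Qn_vanishes_acyclic //.
  by rewrite mulr0 subr0.
- move=> m k Hg Hk; rewrite (qid_alternating P_ml P_qid) // Qn_alternating //.
  by rewrite mulrN opprB opprK addrC.
- by rewrite /a divfK ?coef_Qn_pure_word // subrr.
Qed.
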